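(* Let $(Y,X_1,X_2)$ be a random vector with $Y\in\mathbb{R}$, $X_1\in\mathbb{R}^{p_1}$, $X_2\in\mathbb{R}^{p_2}$ ($p_1,p_2$ positive integers), with finite second moments. Use the squared error loss $L(f,(y,x_1,x_2))=(y-f(x_1,x_2))^2$. Let $\beta=(\beta_1,\beta_2)$ with $\beta_1\in\mathbb{R}^{p_1}$, $\beta_2\in\mathbb{R}^{p_2}$, and $f_\beta(x)=x_1'\beta_1+x_2'\beta_2$. Then $$e_{\text{switch}}(f_\beta)-e_{\text{orig}}(f_\beta)=2\,\text{Cov}(Y,X_1)\beta_1-2\beta_2'\,\text{Cov}(X_2,X_1)\beta_1,$$ and, for a sample $\mathbf{y}\in\mathbb{R}^n$, $\mathbf{X}=[\mathbf{X}_1\ \mathbf{X}_2]$ ($n\times(p_1+p_2)$, $n\ge 2$), $$\hat e_{\text{switch}}(f_\beta)=\frac1n\left\{\mathbf{y}'\mathbf{y}-2\begin{bmatrix}\mathbf{X}_1'\mathbf{W}\mathbf{y}\\ \mathbf{X}_2'\mathbf{y}\end{bmatrix}'\beta+\beta'\begin{bmatrix}\mathbf{X}_1'\mathbf{X}_1 & \mathbf{X}_1'\mathbf{W}\mathbf{X}_2\\ \mathbf{X}_2'\mathbf{W}\mathbf{X}_1 & \mathbf{X}_2'\mathbf{X}_2\end{bmatrix}\beta\right\},$$ where $\mathbf{W}:=\frac{1}{n-1}(\mathbf{1}_n\mathbf{1}_n'-\mathbf{I}_n)$, $\mathbf{1}_n$ is the all-ones vector and $\mathbf{I}_n$ the 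identity.
   Context: For a model $f$: $e_{\text{orig}}(f):=\mathbb{E}L(f,(Y,X_1,X_2))$; $e_{\text{switch}}(f):=\mathbb{E}L(f,(Y^{(b)},X_1^{(a)},X_2^{(b)}))$ where $(Y^{(a)},X_1^{(a)},X_2^{(a)})$, $(Y^{(b)},X_1^{(b)},X_2^{(b)})$ are independent copies of $(Y,X_1,X_2)$. For a sample with rows $i=1,\dots,n$ (outcome $\mathbf{y}_{[i]}$, covariate rows $\mathbf{X}_{1[i,\cdot]},\mathbf{X}_{2[i,\cdot]}$): $\hat e_{\text{switch}}(f):=\frac{1}{n(n-1)}\sum_{i=1}^n\sum_{j\ne i}L\{f,(\mathbf{y}_{[j]},\mathbf{X}_{1[i,\cdot]},\mathbf{X}_{2[j,\cdot]})\}$. *)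

From HB Require Import structures.
From mathcomp Require Import all_boot all_order all_algebra.
From mathcomp Require Import all_classical all_reals all_analysis.
Set Implicit Arguments.
Unset Strict Implicit.
Unset Printing Implicit Defensive.
Import Order.TTheory GRing.Theory Num.Theory.
Local Open Scope ring_scope.

Definition f_lin {R : ringType} {p1 p2 : nat} (b1 : 'cV[R]_p1) (b2 : 'cV[R]_p2)
  (x1 : 'I_p1 -> R) (x2 : 'I_p2 -> R) : R :=
  \sum_(k < p1) x1 k * b1 k 0 + \sum_(k < p2) x2 k * b2 k 0.

Definition sq_loss {R : ringType} {p1 p2 : nat}
  (f : ('I_p1 -> R) -> ('I_p2 -> R) -> R) (y : R) (x1 : 'I_p1 -> R) (x2 : 'I_p2 -> R) : R :=
  (y - f x1 x2) ^+ 2.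

Definition e_orig {d} {T : measurableType d} {R : realType} (P : probability T R)
  {p1 p2 : nat} (f : ('I_p1 -> R) -> ('I_p2 -> R) -> R)
  (Y : T -> R) (X1 : 'I_p1 -> T -> R) (X2 : 'I_p2 -> T -> R) : \bar R :=
  'E_P[fun w => sq_loss f (Y w) (fun k => X1 k w) (fun k => X2 k w)].

(* e_switch(f) = E L(f,(Y^(b),X1^(a),X2^(b))) where copy (a) is the first and
   copy (b) the second coordinate of the product space (T*T, P x P): these are
   two independent copies of (Y,X1,X2). *)
Definition e_switch {d} {T : measurableType d} {R : realType} (P : probability T R)
  {p1 p2 : nat} (f : ('I_p1 -> R) -> ('I_p2 -> R) -> R)
  (Y : T -> R) (X1 : 'I_p1 -> T -> R) (X2 : 'I_p2 -> T -> R) : \bar R :=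
  (\int[(P \x P)%E]_w
     (sq_loss f (Y w.2) (fun k => X1 k w.1) (fun k => X2 k w.2))%:E)%E.

Definition e_switch_hat {R : realFieldType} {n p1 p2 : nat}
  (f : ('I_p1 -> R) -> ('I_p2 -> R) -> R)
  (y : 'cV[R]_n) (X1 : 'M[R]_(n, p1)) (X2 : 'M[R]_(n, p2)) : R :=
  (n%:R * (n%:R - 1))^-1 *
  \sum_(i < n) \sum_(j < n | j != i)
     sq_loss f (y j 0) (fun k => X1 i k) (fun k => X2 j k).

Definition Wmat {R : realFieldType} (n : nat) : 'M[R]_n :=
  (n%:R - 1)^-1 *: (const_mx 1 - 1%:M).

(* For f_beta the loss is (A - B)^2 with A = Y - X2'beta2 and B = X1'beta1.
   Drawing X1 from an independent copy only decouples A from B, so the switched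
   and original errors share E A^2 and E B^2 and differ in the cross term,
   -2 E[A] E[B] against -2 E[A B]: the difference is 2 Cov(A, B), which expands
   bilinearly.  Empirically, with a = y - X2 beta2 and b = X1 beta1, the sum of
   (a_j - b_i)^2 over the pairs i <> j is
   (n - 1) (|a|^2 + |b|^2) - 2 (sum a sum b - a'b), and W is the matrix for which
   b'Wa = (sum a sum b - a'b) / (n - 1). *)

From HB Require Import structures.
From mathcomp Require Import all_boot all_order all_algebra.
From mathcomp Require Import all_classical all_reals all_analysis.
From mathcomp Require Import measurable_realfun ring.
Import Order.TTheory GRing.Theory Num.Theory.
Local Open Scope ring_scope.

Lemma sq_loss_f_lin (R : comNzRingType) (p1 p2 : nat)
    (b1 : 'cV[R]_p1) (b2 : 'cV[R]_p2) (y : R) (x1 : 'I_p1 -> R) (x2 : 'I_p2 -> R) :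
  sq_loss (f_lin b1 b2) y x1 x2
  = ((y - \sum_(k < p2) x2 k * b2 k 0) - \sum_(k < p1) x1 k * b1 k 0) ^+ 2.
Proof. by rewrite /sq_loss /f_lin; congr (_ ^+ 2); ring. Qed.

Lemma sumr_diag_offdiag (R : nmodType) (n : nat) (F : 'I_n -> 'I_n -> R) :
  \sum_(i < n) \sum_(j < n) F i j
  = \sum_(i < n) \sum_(j < n | j != i) F i j + \sum_(i < n) F i i.
Proof. by rewrite -big_split; apply: eq_bigr => i _; rewrite (bigD1 i) //= addrC. Qed.

Lemma double_sumr_sqrB (R : comPzRingType) (n : nat) (a b : 'I_n -> R) :
  \sum_(i < n) \sum_(j < n) (a j - b i) ^+ 2
  = n%:R * \sum_(i < n) (a i ^+ 2 + b i ^+ 2)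
    - 2 * ((\sum_(i < n) b i) * (\sum_(j < n) a j)).
Proof.
have inner i : \sum_(j < n) (a j - b i) ^+ 2
    = \sum_(j < n) a j ^+ 2 + n%:R * b i ^+ 2 - 2 * (b i * \sum_(j < n) a j).
  have -> : n%:R * b i ^+ 2 = \sum_(j < n) b i ^+ 2.
    by rewrite sumr_const card_ord mulr_natl.
  by rewrite !mulr_sumr -big_split -sumrB /=; apply: eq_bigr => j _; ring.
under eq_bigr => i _ do rewrite inner.
rewrite sumrB big_split /= sumr_const card_ord -!mulr_sumr -mulr_suml big_split /=.
rewrite -mulr_natl; ring.
Qed.

Lemma offdiag_sumr_sqrB (R : comPzRingType) (n : nat) (a b : 'I_n -> R) :
  \sum_(i < n) \sum_(j < n | j != i) (a j - b i) ^+ 2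
  = (n%:R - 1) * \sum_(i < n) (a i ^+ 2 + b i ^+ 2)
    - 2 * ((\sum_(i < n) b i) * (\sum_(j < n) a j) - \sum_(i < n) b i * a i).
Proof.
apply: (addIr (\sum_(i < n) (a i - b i) ^+ 2)).
rewrite -sumr_diag_offdiag double_sumr_sqrB.
have -> : \sum_(i < n) (a i - b i) ^+ 2
    = \sum_(i < n) (a i ^+ 2 + b i ^+ 2) - 2 * \sum_(i < n) b i * a i.
  by rewrite mulr_sumr -sumrB; apply: eq_bigr => i _; ring.
ring.
Qed.

Lemma trmx11 (R : Type) (M : 'M[R]_1) : M^T = M.
Proof. by apply/matrixP => i j; rewrite !ord1 mxE. Qed.

Lemma block_quadratic_formE (R : comPzRingType) (n p1 p2 : nat) (W : 'M[R]_n)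
    (y : 'cV[R]_n) (X1 : 'M[R]_(n, p1)) (X2 : 'M[R]_(n, p2))
    (b1 : 'cV[R]_p1) (b2 : 'cV[R]_p2) :
  W^T = W ->
  let beta := col_mx b1 b2 in
  let u := y - X2 *m b2 in
  let v := X1 *m b1 in
  y^T *m y - 2%:R *: (col_mx (X1^T *m W *m y) (X2^T *m y))^T *m beta
  + beta^T *m block_mx (X1^T *m X1) (X1^T *m W *m X2)
                       (X2^T *m W *m X1) (X2^T *m X2) *m beta
  = u^T *m u + v^T *m v - 2%:R *: (v^T *m W *m u).
Proof.
move=> WT beta u v.
rewrite /beta /u /v !tr_col_mx mul_row_block !mul_row_col -!scalemxAl.
have -> : (y - X2 *m b2)^T = y^T - (X2 *m b2)^T by apply/matrixP => i j; rewrite !mxE.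
rewrite !trmx_mul !trmxK mul_row_col !mulmxBl !mulmxBr !mulmxDl !mulmxA WT.
have transpose11 (m : nat) (A : 'rV[R]_m) (c : 'cV[R]_m) : A *m c = c^T *m A^T.
  by rewrite -[LHS]trmx11 trmx_mul.
rewrite [y^T *m W *m X1 *m b1]transpose11 [b2^T *m X2^T *m y]transpose11.
rewrite [b2^T *m X2^T *m W *m X1 *m b1]transpose11 !trmx_mul !trmxK WT !mulmxA.
(* What is left is an identity between 1 x 1 matrices, i.e. between scalars. *)
move: (y^T *m y) (y^T *m X2 *m b2) (b1^T *m X1^T *m W *m y) (b1^T *m X1^T *m X1 *m b1)
  (b1^T *m X1^T *m W *m X2 *m b2) (b2^T *m X2^T *m X2 *m b2) => A B C D E F.
by apply/matrixP => i j; rewrite !mxE; ring.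
Qed.

Lemma Wmat_tr (R : realFieldType) (n : nat) : (Wmat n)^T = Wmat n :> 'M[R]_n.
Proof. by apply/matrixP => i j; rewrite /Wmat !mxE eq_sym. Qed.

Lemma Wmat_bilinE (R : realFieldType) (n : nat) (u v : 'cV[R]_n) :
  (v^T *m Wmat n *m u) 0 0
  = (n%:R - 1)^-1
    * ((\sum_(i < n) v i 0) * (\sum_(j < n) u j 0) - \sum_(i < n) v i 0 * u i 0).
Proof.
rewrite /Wmat -scalemxAr -scalemxAl mulmxBr mulmx1 mulmxBl !mxE mulr_sumr.
congr (_ * (_ - _)); apply: eq_bigr => j _; rewrite !mxE //; congr (_ * _).
by apply: eq_bigr => i _; rewrite !mxE mulr1.
Qed.

Lemma e_switch_hat_f_lin (R : realFieldType) (n p1 p2 : nat)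
    (b1 : 'cV[R]_p1) (b2 : 'cV[R]_p2)
    (y : 'cV[R]_n) (Xs1 : 'M[R]_(n, p1)) (Xs2 : 'M[R]_(n, p2)) :
  (2 <= n)%N ->
  let beta : 'cV[R]_(p1 + p2) := col_mx b1 b2 in
  let W := Wmat n in
  e_switch_hat (f_lin b1 b2) y Xs1 Xs2
  = n%:R^-1 *
    (y^T *m y
     - 2%:R *: (col_mx (Xs1^T *m W *m y) (Xs2^T *m y))^T *m beta
     + beta^T *m block_mx (Xs1^T *m Xs1) (Xs1^T *m W *m Xs2)
                          (Xs2^T *m W *m Xs1) (Xs2^T *m Xs2) *m beta) 0 0.
Proof.
move=> n2 beta W; rewrite block_quadratic_formE ?Wmat_tr //.
set u := y - Xs2 *m b2; set v := Xs1 *m b1.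
have loss i j : sq_loss (f_lin b1 b2) (y j 0) (fun k => Xs1 i k) (fun k => Xs2 j k)
    = (u j 0 - v i 0) ^+ 2.
  by rewrite sq_loss_f_lin !mxE.
rewrite /e_switch_hat.
under eq_bigr => i _ do under eq_bigr => j _ do rewrite loss.
have entry00 (A B C : 'M[R]_1) (c : R) :
    (A + B - c *: C) 0 0 = A 0 0 + B 0 0 - c * C 0 0.
  by rewrite !mxE.
have sqr_norm (a : 'cV[R]_n) : (a^T *m a) 0 0 = \sum_(i < n) a i 0 ^+ 2.
  by rewrite mxE; apply: eq_bigr => i _; rewrite mxE expr2.
rewrite offdiag_sumr_sqrB entry00 !sqr_norm Wmat_bilinE -big_split /=.
have n0 : n%:R != 0 :> R by rewrite pnatr_eq0 -lt0n ltnW.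
have n1 : n%:R - 1 != 0 :> R by rewrite subr_eq0 pnatr_eq1 neq_ltn n2 orbT.
by field; rewrite n0 n1.
Qed.

Section switched_error.
Context d (T : measurableType d) (R : realType) (P : probability T R).

Let Pfin : P setT \is a fin_num := fin_num_measure P _ measurableT.

Lemma Lfun_sum_mulr (p : R) (I : Type) (r : seq I) (F : I -> T -> R) (c : I -> R) :
  (1 <= p)%R -> (forall k, F k \in Lfun P p%:E) ->
  (fun w => \sum_(k <- r) F k w * c k)%R \in Lfun P p%:E.
Proof.
move=> p1 Fp; elim: r => [|k r IH].
  rewrite (_ : (fun _ => _) = cst 0%R) ?Lfun_cst //.
  by apply/funext => w; rewrite big_nil.
rewrite (_ : (fun w => _) = (c k \o* F k \+ fun w => \sum_(i <- r) F i w * c i)%R).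
  by apply: (Lfun_addr_closed _ _).2; rewrite ?lee_fin //; apply: Lfun_scale.
by apply/funext => w; rewrite big_cons /= mulrC.
Qed.

Lemma covariance_sumr (U : T -> R) (I : Type) (r : seq I) (F : I -> T -> R) (c : I -> R) :
  U \in Lfun P 2%:E -> (forall k, F k \in Lfun P 2%:E) ->
  covariance P U (fun w => \sum_(k <- r) F k w * c k)%R
  = (\sum_(k <- r) fine (covariance P U (F k)) * c k)%:E.
Proof.
move=> U2 F2; elim: r => [|k r IH].
  rewrite big_nil (_ : (fun _ => _) = cst 0%R) ?covariance_cst_r //.
  by apply/funext => w; rewrite big_nil.
rewrite (_ : (fun w => _)
    = (c k \o* F k \+ fun w => \sum_(i <- r) F i w * c i)%R); last first.
  by apply/funext => w; rewrite big_cons /= mulrC.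
rewrite covarianceDr ?Lfun_scale ?Lfun_sum_mulr ?ler1n // IH.
have U1 := Lfun_subset12 Pfin U2; have Fk1 := Lfun_subset12 Pfin (F2 k).
have UFk1 := Lfun2_mul_Lfun1 U2 (F2 k).
rewrite covarianceZr // big_cons.
rewrite -[covariance P U (F k)]fineK ?covariance_fin_num //.
by rewrite -EFinM -EFinD mulrC.
Qed.

Lemma covariance_suml (V : T -> R) (I : Type) (r : seq I) (F : I -> T -> R) (c : I -> R) :
  V \in Lfun P 2%:E -> (forall k, F k \in Lfun P 2%:E) ->
  covariance P (fun w => \sum_(k <- r) F k w * c k)%R V
  = (\sum_(k <- r) fine (covariance P (F k) V) * c k)%:E.
Proof.
move=> V2 F2; rewrite covarianceC covariance_sumr //.
by under eq_bigr do rewrite covarianceC.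
Qed.

Lemma integrable_prod_mul (h g : T -> R) : h \in Lfun P 1 -> g \in Lfun P 1 ->
  (P \x P)%E.-integrable setT (fun w => (h w.1 * g w.2)%:E).
Proof.
move=> /Lfun1_integrable ih /Lfun1_integrable ig.
have mh : measurable_fun setT h by apply/measurable_EFinP; exact: measurable_int ih.
have mg : measurable_fun setT g by apply/measurable_EFinP; exact: measurable_int ig.
have mhg : measurable_fun setT (fun w : T * T => (h w.1 * g w.2)%:E).
  apply/measurable_EFinP; apply: measurable_funM.
    exact: measurableT_comp mh measurable_fst.
  exact: measurableT_comp mg measurable_snd.
apply: (@integrable12ltyP _ _ _ _ _ P P _ mhg).2.
under eq_integral => x _.
  under eq_integral => y _ do rewrite /= normrM EFinM.
  rewrite ge0_integralZl //; last by apply/measurable_EFinP; exact: measurableT_comp.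
  over.
rewrite /= ge0_integralZr //; last exact: integral_ge0.
  2: by apply/measurable_EFinP; exact: measurableT_comp.
have [_ hfin] := integrableP _ _ _ ih; have [_ gfin] := integrableP _ _ _ ig.
by rewrite lte_mul_pinfty // ?integral_ge0 // ge0_fin_numE ?integral_ge0.
Qed.

Lemma integral_prod_mul (h g : T -> R) : h \in Lfun P 1 -> g \in Lfun P 1 ->
  (\int[(P \x P)%E]_w (h w.1 * g w.2)%:E = 'E_P[h] * 'E_P[g])%E.
Proof.
move=> h1 g1; have /Lfun1_integrable ih := h1; have /Lfun1_integrable ig := g1.
have gfin : (\int[P]_y (g y)%:E = (fine (\int[P]_y (g y)%:E))%:E)%E.
  by rewrite fineK // integrable_fin_num.
rewrite -(integral12_prod_meas1 (integrable_prod_mul _ _ h1 g1)) /fubini_F /=.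
under eq_integral => x _.
  under eq_integral => y _ do rewrite EFinM.
  rewrite integralZl // gfin.
  over.
by rewrite /= integralZr // !unlock -gfin.
Qed.

Lemma integral_prod_sqrB_covariance (U V : T -> R) :
  U \in Lfun P 2%:E -> V \in Lfun P 2%:E ->
  (\int[(P \x P)%E]_w ((U w.2 - V w.1) ^+ 2)%R%:E - 'E_P[fun w => ((U w - V w) ^+ 2)%R])%E
  = (2 * fine (covariance P U V))%:E.
Proof.
move=> U2 V2.
have U1 := Lfun_subset12 Pfin U2; have V1 := Lfun_subset12 Pfin V2.
have UV1 := Lfun2_mul_Lfun1 U2 V2.
have sqr1 X : X \in Lfun P 2%:E -> (fun w => X w ^+ 2)%R \in Lfun P 1.
  by move=> X2; apply/Lfun1_integrable; exact: Lfun2_integrable_sqr.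
have U21 := sqr1 _ U2; have V21 := sqr1 _ V2.
have one1 : cst 1%R \in Lfun P 1 := Lfun_cst _ _ 1.
have mU1 : ((-2) \o* U)%R \in Lfun P 1 by apply: Lfun_scale.
have mUV1 : ((-2) \o* (U * V))%R \in Lfun P 1 by apply: Lfun_scale.
have switched : (\int[(P \x P)%E]_w ((U w.2 - V w.1) ^+ 2)%R%:E
    = 'E_P[fun w => (U w ^+ 2)%R] + 'E_P[V] * 'E_P[(-2) \o* U]
      + 'E_P[fun w => (V w ^+ 2)%R])%E.
  (* Each summand factors over w.1 and w.2, so its integral is a product of expectations. *)
  rewrite (eq_integral (fun w => (cst 1 w.1 * U w.2 ^+ 2)%R%:E
      + (V w.1 * ((-2) \o* U) w.2)%R%:E + (V w.1 ^+ 2 * cst 1 w.2)%R%:E)%E); last first.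
    by move=> w _; rewrite -!EFinD /=; congr _%:E; ring.
  have iU := integrable_prod_mul _ (fun w => U w ^+ 2)%R one1 U21.
  have iUV := integrable_prod_mul _ _ V1 mU1.
  have iV := integrable_prod_mul (fun w => V w ^+ 2)%R _ V21 one1.
  rewrite integralD ?integrableD // integralD //.
  rewrite (integral_prod_mul _ (fun w => U w ^+ 2)%R) // integral_prod_mul //.
  rewrite (integral_prod_mul (fun w => V w ^+ 2)%R) //.
  by rewrite expectation_cst mul1e mule1.
have orig : ('E_P[fun w => ((U w - V w) ^+ 2)%R]
    = 'E_P[fun w => (U w ^+ 2)%R] + 'E_P[(-2) \o* (U * V)%R]
      + 'E_P[fun w => (V w ^+ 2)%R])%E.
  rewrite -!expectationD ?(Lfun_addr_closed _ _).2 ?lee_fin //.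
  by congr ('E_P[_])%E; apply/funext => w; rewrite /= !fctE; ring.
rewrite switched orig !expectationZl // covarianceE //.
rewrite -(fineK (expectation_fin_num U1)) -(fineK (expectation_fin_num V1)).
rewrite -(fineK (expectation_fin_num UV1)) -(fineK (expectation_fin_num U21)).
rewrite -(fineK (expectation_fin_num V21)) -!EFinM -!EFinD /=.
by congr _%:E; ring.
Qed.

Lemma e_switch_sub_e_orig_f_lin (p1 p2 : nat)
    (Y : T -> R) (X1 : 'I_p1 -> T -> R) (X2 : 'I_p2 -> T -> R)
    (b1 : 'cV[R]_p1) (b2 : 'cV[R]_p2) :
  Y \in Lfun P 2%:E -> (forall k, X1 k \in Lfun P 2%:E) ->
  (forall k, X2 k \in Lfun P 2%:E) ->
  (e_switch P (f_lin b1 b2) Y X1 X2 - e_orig P (f_lin b1 b2) Y X1 X2)%E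
  = (2 * \sum_(k < p1) fine (covariance P Y (X1 k)) * b1 k 0
     - 2 * \sum_(j < p2) \sum_(k < p1)
             b2 j 0 * fine (covariance P (X2 j) (X1 k)) * b1 k 0)%:E.
Proof.
move=> Y2 X12 X22.
pose B w := \sum_(k < p1) X1 k w * b1 k 0.
pose C w := \sum_(j < p2) X2 j w * b2 j 0.
have B2 : B \in Lfun P 2%:E by apply: Lfun_sum_mulr; rewrite ?ler1n.
have C2 : C \in Lfun P 2%:E by apply: Lfun_sum_mulr; rewrite ?ler1n.
have A2 : (Y \- C)%R \in Lfun P 2%:E.
  by apply: (Lfun_addr_closed _ _).2 => //; rewrite ?lee_fin ?ler1n ?rpredN.
rewrite /e_switch /e_orig.
under eq_integral do rewrite sq_loss_f_lin.
rewrite [X in 'E_P[X]%E](_ : _ = fun w => ((Y \- C) w - B w) ^+ 2); last first.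
  by apply/funext => w; rewrite sq_loss_f_lin.
rewrite (integral_prod_sqrB_covariance _ _ A2 B2) covarianceBl // covariance_sumr //.
rewrite covariance_suml // -EFinB /=.
have covB j : covariance P (X2 j) B
    = (\sum_(k < p1) fine (covariance P (X2 j) (X1 k)) * b1 k 0)%:E.
  exact: covariance_sumr.
congr _%:E; rewrite mulrBr; congr (_ - 2 * _).
apply: eq_bigr => j _; rewrite covB /= mulr_suml; apply: eq_bigr => k _; ring.
Qed.

End switched_error.

Theorem theorem2 (R : realType) (d : measure_display) (T : measurableType d)
  (P : probability T R) (p1 p2 : nat) (hp1 : (0 < p1)%N) (hp2 : (0 < p2)%N)
  (Y : T -> R) (X1 : 'I_p1 -> T -> R) (X2 : 'I_p2 -> T -> R)
  (HY : Y \in Lfun P 2%:E)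
  (HX1 : forall k, X1 k \in Lfun P 2%:E)
  (HX2 : forall k, X2 k \in Lfun P 2%:E)
  (b1 : 'cV[R]_p1) (b2 : 'cV[R]_p2) :
  (e_switch P (f_lin b1 b2) Y X1 X2 - e_orig P (f_lin b1 b2) Y X1 X2
   = (2 * \sum_(k < p1) fine (covariance P Y (X1 k)) * b1 k 0
      - 2 * \sum_(j < p2) \sum_(k < p1)
              b2 j 0 * fine (covariance P (X2 j) (X1 k)) * b1 k 0)%:E)%E
  /\
  (forall (n : nat) (y : 'cV[R]_n) (Xs1 : 'M[R]_(n, p1)) (Xs2 : 'M[R]_(n, p2)),
     (2 <= n)%N ->
     let beta : 'cV[R]_(p1 + p2) := col_mx b1 b2 in
     let W := Wmat n in
     e_switch_hat (f_lin b1 b2) y Xs1 Xs2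
     = n%:R^-1 *
       (y^T *m y
        - 2%:R *: (col_mx (Xs1^T *m W *m y) (Xs2^T *m y))^T *m beta
        + beta^T *m block_mx (Xs1^T *m Xs1) (Xs1^T *m W *m Xs2)
                             (Xs2^T *m W *m Xs1) (Xs2^T *m Xs2) *m beta) 0 0).
Proof.
split; first exact: e_switch_sub_e_orig_f_lin.
by move=> n y Xs1 Xs2; exact: e_switch_hat_f_lin.
Qed.
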